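(* Let $Y$ be an indeterminate adjunction space with core space $X$, attachment spaces $\{A_j\}_{j\in\mathbb{N}}$ and attachment points $\{x_j\}_{j\in\mathbb{N}}$. If $Z\subseteq Y$ is a subspace that is a Peano continuum and meets $X$ and each set $A_j\setminus\{x_j\}$, then $Z$ is homeomorphic to the shrinking adjunction space $\operatorname{\bf Adj}(Z\cap X,x_j,Z\cap A_j,x_j)$ obtained by attaching the spaces $\{Z\cap A_j\}_{j\in\mathbb{N}}$ to $Z\cap X$ along the points $\{x_j\}_{j\in\mathbb{N}}$.
   Context: All spaces Hausdorff; Peano continuum = connected, locally path-connected compact metric space. $Y$ is an indeterminate adjunction space with core $X$, attachment spaces $\{A_j\}_{j\in J}$ and attachment points $\{x_j\}_{j\in J}$ if $X$ is a closed subspace of $Y$ and $Y\setminus X$ is the disjoint union of open sets $N_j$ ($j\in J$) with $A_j=\overline{N_j}$ and $A_j\cap X=\{x_j\}$ for all $j$. The shrinking adjunction space $\operatorname{\bf Adj}(X',x_j,A'_j,x_j)$ is $\varprojlim_k Y_k\subseteq\prod_k Y_k$ where $Y_k$ is the adjunction space from $X'\sqcup A'_1\sqcup\dots\sqcup A'_k$ identifying the basepoint $x_j\in A'_j$ with $x_j\in X'$, and $Y_{k+1}\to Y_k$ collapses $A'_{k+1}$ to $x_{k+1}$. *)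

From HB Require Import structures.
From mathcomp Require Import all_boot all_order all_algebra generic_quotient.
From mathcomp Require Import all_classical all_reals all_analysis.

Set Implicit Arguments.
Unset Strict Implicit.
Unset Printing Implicit Defensive.

Import Order.TTheory GRing.Theory Num.Theory.
Local Open Scope classical_set_scope.
Local Open Scope ring_scope.
Local Open Scope quotient_scope.

Definition indeterminate_adjunction (Y : topologicalType) (X : set Y)
    (A : nat -> set Y) (x : nat -> Y) : Prop :=
  closed X /\
  exists N : nat -> set Y,
    [/\ (forall j, open (N j)),
        (forall i j, i <> j -> N i `&` N j = set0),
        ~` X = \bigcup_j N j,
        (forall j, A j = closure (N j)) &
        (forall j, A j `&` X = [set x j])].

Definition path_connected_set (R : realType) (T : topologicalType) (V : set T)
  : Prop :=
  forall a b, V a -> V b ->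
    exists g : R -> T, [/\ {within `[0, 1], continuous g},
      g 0 = a, g 1 = b & g @` `[0, 1] `<=` V].

Definition locally_path_connected (R : realType) (T : topologicalType) : Prop :=
  forall (p : T) (U : set T), nbhs p U ->
    exists V : set T, [/\ nbhs p V, V `<=` U & path_connected_set R V].

Definition metrizable (R : realType) (T : topologicalType) : Prop :=
  exists d : T -> T -> R,
    [/\ (forall p q, 0 <= d p q),
        (forall p q, d p q = 0 <-> p = q),
        (forall p q, d p q = d q p),
        (forall p q r, d p r <= d p q + d q r) &
        (forall (p : T) (U : set T),
           nbhs p U <-> exists2 e : R, 0 < e & [set q | d p q < e] `<=` U)].

Definition peano_continuum (R : realType) (T : topologicalType) : Prop :=
  [/\ compact [set: T], connected [set: T], locally_path_connected R T
      & metrizable R T].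

Definition homeomorphic (S T : topologicalType) : Prop :=
  exists (f : S -> T) (g : T -> S),
    [/\ continuous f, continuous g, cancel f g & cancel g f].

(* Shrinking adjunction space Adj(X', x_j, A'_j, a_j):                      *)
(* Y_k = (X' + A'_0 + ... + A'_(k-1)) / (a_j ~ x_j), and the inverse limit *)
(* of the maps Y_(k+1) -> Y_k collapsing A'_k to x_k, as a subspace of the *)
(* product  prod_k Y_k.                                                     *)
Section ShrinkingAdjunction.
Context (X' : topologicalType) (A : nat -> topologicalType)
        (x : nat -> X') (a : forall j, A j).

Definition adj_piece (k : nat) (o : option 'I_k) : topologicalType :=
  if o is Some j then A (nat_of_ord j) else X'.

Definition adj_sum (k : nat) := {o : option 'I_k & adj_piece o}.

Definition adj_glue (k : nat) (s : adj_sum k) : X' + {j : nat & A j} :=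
  let: existT o y := s in
  (match o return adj_piece o -> X' + {j : nat & A j} with
   | None => fun y => inl y
   | Some j => fun y => if `[< y = a j >] then inl (x j)
                        else inr (existT _ (nat_of_ord j) y)
   end) y.

Definition adj_rel (k : nat) : rel (adj_sum k) :=
  fun s t => `[< adj_glue s = adj_glue t >].

Lemma adj_rel_refl k : reflexive (@adj_rel k).
Proof. by move=> s; apply/asboolP. Qed.

Lemma adj_rel_sym k : symmetric (@adj_rel k).
Proof.
by move=> s t; apply/idP/idP => /asboolP e; apply/asboolP.
Qed.

Lemma adj_rel_trans k : transitive (@adj_rel k).
Proof.
by move=> s t u /asboolP e1 /asboolP e2; apply/asboolP; rewrite e1.
Qed.

Definition adj_equiv k := EquivRel (@adj_rel k) (@adj_rel_refl k)
  (@adj_rel_sym k) (@adj_rel_trans k).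

Section Stage.
Variable k : nat.
Definition adj_stage := {eq_quot adj_equiv k}.
HB.instance Definition _ := Topological.copy adj_stage
  (quotient_topology adj_stage).
HB.instance Definition _ := Quotient.on adj_stage.
End Stage.

(* Y_(k+1) -> Y_k : collapse A'_k to x_k, identity elsewhere *)
Definition adj_bond_sum (k : nat) (s : adj_sum k.+1) : adj_stage k :=
  let: existT o y := s in
  (match o return adj_piece o -> adj_stage k with
   | None => fun y => \pi_(adj_stage k) (existT (@adj_piece k) None y)
   | Some j => fun y =>
       (match (nat_of_ord j < k)%N as b
              return ((nat_of_ord j < k)%N = b) -> adj_stage k with
        | true => fun h =>
            \pi_(adj_stage k) (existT (@adj_piece k) (Some (Ordinal h)) y)
        | false => fun _ =>
            \pi_(adj_stage k) (existT (@adj_piece k) None (x k))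
        end) erefl
   end) y.

Definition adj_bond (k : nat) (y : adj_stage k.+1) : adj_stage k :=
  adj_bond_sum (repr y).

Definition adj_limit_set : set (prod_topology (fun k => adj_stage k)) :=
  [set y | forall k : nat, @adj_bond k (y k.+1) = y k].

Definition shrinking_adjunction : Type := set_type adj_limit_set.
HB.instance Definition _ := Topological.on shrinking_adjunction.

End ShrinkingAdjunction.

From mathcomp Require Import all_boot all_order all_algebra generic_quotient.
From mathcomp Require Import all_classical all_reals all_analysis.

(* Let [N j] be the open sets with [A j = closure (N j)] from the definition.
   Each [x j] lies in [Z]: [Z] is connected, meets [N j] and its complement,
   and [N j `|` [set x j]] is closed.  Crushing every [Z `&` N j] with [k <= j]
   to [x j] gives a map [collapse k : Z -> Z], continuous because [Z] is
   locally path connected and a path from a point of [X] into [N j] passes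
   through [x j].  Its image is a copy of the stage [Y_k] (realized in [Z] by a
   continuous injection of a compact space into a Hausdorff one), the copies
   are compatible with the bonding maps, and the induced map from [Z] to the
   inverse limit is a continuous bijection of a compact space onto a Hausdorff
   space. *)

Set Implicit Arguments.
Unset Strict Implicit.
Unset Printing Implicit Defensive.
Import Order.TTheory Num.Theory.
Local Open Scope classical_set_scope.
Local Open Scope quotient_scope.

Lemma inj_hausdorff (S T : topologicalType) (f : S -> T) :
  continuous f -> injective f -> hausdorff_space T -> hausdorff_space S.
Proof.
move=> cf injf; rewrite !open_hausdorff => hT p q pq.
have fpq : f p != f q by apply: contra pq => /eqP /injf ->.
have [[P Q] /= [Pp Qq] [oP oQ /eqP PQ]] := hT _ _ fpq.
exists (f @^-1` P, f @^-1` Q); first by split; rewrite inE; apply/set_mem.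
split; [exact: open_comp|exact: open_comp|].
by apply/eqP; rewrite -preimage_setI PQ preimage_set0.
Qed.

Lemma set_type_compact (T : topologicalType) (B : set T) :
  compact B -> compact [set: set_type B].
Proof.
move=> cB F PF _.
have FB : F (set_val @^-1` B).
  by apply: filterS filterT => s _; exact: set_mem (valP s).
have [y [By Fy]] := cB _ (fmap_proper_filter _ PF) FB.
exists (exist _ y (mem_set By)); split => // P Q FP.
rewrite nbhsE => -[W [[V oV <-] Vy] WQ].
have FvP : F (set_val @^-1` (set_val @` P)).
  by apply: filterS FP => s Ps; exists s.
have [_ [[s Ps <-] Vs]] := Fy _ V FvP (open_nbhs_nbhs (conj oV Vy)).
by exists s; split => //; exact: WQ.
Qed.

Lemma set_val_image_setT (T : Type) (B : set T) :
  set_val @` [set: set_type B] = B.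
Proof.
apply/seteqP; split => [_ [s _ <-]|y By]; first exact: set_mem (valP s).
by exists (exist _ y (mem_set By)).
Qed.

Lemma set_val_continuous (T : topologicalType) (B : set T) :
  continuous (set_val : set_type B -> T).
Proof. exact: initial_continuous. Qed.

Definition set_type_incl (T : Type) (B C : set T) (BC : B `<=` C)
    (b : set_type B) : set_type C :=
  exist _ (val b) (mem_set (BC _ (set_mem (valP b)))).

Lemma set_type_incl_continuous (T : topologicalType) (B C : set T)
    (BC : B `<=` C) : continuous (set_type_incl BC).
Proof. by apply: continuous_comp_initial; exact: set_val_continuous. Qed.

Lemma prod_topology_continuous (S : topologicalType) (I : Type)
    (K : I -> topologicalType) (g : S -> prod_topology K) :
  (forall i, continuous (fun s => g s i)) -> continuous g.
Proof.
move=> cg s; apply/cvg_sup => i U.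
rewrite nbhsE => -[_ [[V oV <-] Vg] VU].
by apply: filterS VU _; apply: (cg i s); exact: open_nbhs_nbhs.
Qed.

Lemma compact_inj_continuous_lift (S K T : topologicalType) (e : K -> T)
    (g : S -> K) :
  compact [set: K] -> hausdorff_space T -> continuous e -> injective e ->
  continuous (e \o g) -> continuous g.
Proof.
move=> cK hT ce ie ceg; apply/continuous_closedP => C cC.
have -> : g @^-1` C = (e \o g) @^-1` (e @` C).
  by apply/seteqP; split => s /=; [exists (g s)|case=> k Ck /ie <-].
apply: preimage_closed => [s _|]; first exact: ceg.
apply: compact_closed => //; apply: continuous_compact.
  exact/continuous_subspaceT.
exact: subclosed_compact cC cK _.
Qed.

Lemma compact_hausdorff_homeomorphic (S T : topologicalType) (f : S -> T) :
  compact [set: S] -> hausdorff_space T -> continuous f -> injective f ->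
  (forall y, exists x, f x = y) -> homeomorphic S T.
Proof.
move=> cS hT cf injf surjf.
pose g y := projT1 (cid (surjf y)).
have gK : cancel g f by move=> y; exact: projT2 (cid (surjf y)).
exists f, g; split => //; last by move=> x; apply: injf; rewrite gK.
apply: compact_inj_continuous_lift cS hT cf injf _.
rewrite (_ : f \o g = id); first by move=> y; exact: cvg_id.
exact/funext/gK.
Qed.

Lemma connected_through_point (T : topologicalType) (S U : set T) (p : T) :
  connected S -> open U -> closed (U `|` [set p]) ->
  S `&` U !=set0 -> S `&` ~` U !=set0 -> S p.
Proof.
move=> cS oU cUp [s SUs] [t [St nUt]]; apply: contrapT => nSp.
suff SU : S `&` U = S by move: St; rewrite -SU => -[].
apply: cS; [by exists s | by exists U | exists (U `|` [set p]) => //].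
by rewrite setIUr setI1 (memNset nSp) setU0.
Qed.

Section IndeterminateAdjunction.
Variables (Y : topologicalType) (X : set Y) (A : nat -> set Y) (x : nat -> Y)
  (N : nat -> set Y).
Hypothesis oN : forall j, open (N j).
Hypothesis dN : forall i j, i <> j -> N i `&` N j = set0.
Hypothesis XN : ~` X = \bigcup_j N j.
Hypothesis AN : forall j, A j = closure (N j).
Hypothesis AX : forall j, A j `&` X = [set x j].

Lemma N_notX j y : N j y -> ~ X y.
Proof. by move=> Njy Xy; have : (~` X) y by rewrite XN; exists j. Qed.

Lemma notX_N y : ~ X y -> exists j, N j y.
Proof.
by move=> nXy; have : (~` X) y := nXy; rewrite XN => -[j _ Njy]; exists j.
Qed.

Lemma N_index_uniq i j y : N i y -> N j y -> i = j.
Proof.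
move=> Niy Njy; apply: contrapT => ij.
by have : (N i `&` N j) y by []; rewrite dN.
Qed.

Lemma x_X j : X (x j).
Proof. by have [] : (A j `&` X) (x j) by rewrite AX. Qed.

Lemma A_NUx j : A j = N j `|` [set x j].
Proof.
apply/seteqP; split => [y Ay|y [Njy|->]]; last 2 first.
- by rewrite AN; exact: subset_closure.
- by have [] : (A j `&` X) (x j) by rewrite AX.
have [Xy|/notX_N [i Niy]] := pselect (X y).
  by right; have : (A j `&` X) y by []; rewrite AX.
left; suff <- : i = j by [].
apply: contrapT => ij; move: Ay; rewrite AN => /(_ (N i)) [|z [Njz Niz]].
  exact: open_nbhs_nbhs.
exact/ij/(N_index_uniq Niz Njz).
Qed.

Lemma A_N j y : A j y -> y <> x j -> N j y.
Proof. by rewrite A_NUx => -[// | -> /(_ erefl)]. Qed.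

Lemma N_A j y : N j y -> A j y.
Proof. by rewrite A_NUx; left. Qed.

Lemma x_A j : A j (x j).
Proof. by rewrite A_NUx; right. Qed.

Lemma closed_NUx j : closed (N j `|` [set x j]).
Proof. by rewrite -A_NUx AN; exact: closed_closure. Qed.

Definition index_of (y : Y) : nat := xget 0 [set j | N j y].

Lemma index_ofE j y : N j y -> index_of y = j.
Proof.
move=> Njy; apply: (N_index_uniq _ Njy).
by apply: (@xgetPex _ 0 [set i | N i y]); exists j.
Qed.

Section Subcontinuum.
Variables (R : realType) (Z : set Y).
Local Notation T := (set_type Z).
Hypothesis hY : hausdorff_space Y.
Hypothesis cX : closed X.
Hypothesis cT : compact [set: T].
Hypothesis conT : connected [set: T].
Hypothesis lpcT : locally_path_connected R T.
Hypothesis ZX : Z `&` X !=set0.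
Hypothesis ZA : forall j, Z `&` (A j `\ x j) !=set0.

Lemma Z_val (z : T) : Z (val z).
Proof. exact: set_mem (valP z). Qed.

Lemma Z_connected : connected Z.
Proof.
rewrite -(set_val_image_setT Z); apply: connected_continuous_connected conT _.
exact/continuous_subspaceT/set_val_continuous.
Qed.

Lemma T_hausdorff : hausdorff_space T.
Proof. exact: inj_hausdorff (@set_val_continuous _ Z) val_inj hY. Qed.

Lemma Z_compact : compact Z.
Proof.
rewrite -(set_val_image_setT Z); apply: continuous_compact cT.
exact/continuous_subspaceT/set_val_continuous.
Qed.

Lemma Z_x j : Z (x j).
Proof.
apply: connected_through_point Z_connected (oN j) (@closed_NUx j) _ _.
  by have [y [Zy [Ay yx]]] := ZA j; exists y; split => //; exact: A_N.
by have [y [Zy Xy]] := ZX; exists y; split => // /N_notX; apply.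
Qed.

Definition x_in_Z j : T := exist _ (x j) (mem_set (Z_x j)).

Lemma connected_x_in_Z (S : set T) j : connected S ->
    S `&` (set_val @^-1` N j) !=set0 -> S `&` ~` (set_val @^-1` N j) !=set0 ->
  S (x_in_Z j).
Proof.
move=> cS [s [Ss Njs]] [t [St nNjt]].
have : (set_val @` S) (x j).
  apply: connected_through_point (oN j) (@closed_NUx j) _ _.
  - apply: connected_continuous_connected cS _.
    exact/continuous_subspaceT/set_val_continuous.
  - by exists (val s); split => //; exists s.
  - by exists (val t); split => //; exists t.
by case=> s' Ss' s'x; rewrite (_ : x_in_Z j = s') //; exact: val_inj.
Qed.

Definition collapse (k : nat) (z : T) : T :=
  let j := index_of (val z) in
  if `[< N j (val z) >] && (k <= j) then x_in_Z j else z.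

Lemma collapseN k z j :
  N j (val z) -> collapse k z = if (k <= j) then x_in_Z j else z.
Proof. by move=> Njz; rewrite /collapse (index_ofE Njz) asboolT. Qed.

Lemma collapseX k z : X (val z) -> collapse k z = z.
Proof. by move=> Xz; rewrite /collapse asboolF // => /N_notX. Qed.

Lemma collapse_path_connected_subset k (V : set T) z :
  path_connected_set R V -> V z -> X (val z) -> collapse k @` V `<=` V.
Proof.
move=> pcV Vz Xz _ [w Vw <-].
have [Xw|/notX_N [j Njw]] := pselect (X (val w)); first by rewrite collapseX.
rewrite (collapseN k Njw); case: ifP => // _.
have [g [cg g0 g1 gV]] := pcV w z Vw Vz.
have i0 : (0%R : R) \in `[0, 1]%R by rewrite in_itv /= lexx ler01.
have i1 : (1%R : R) \in `[0, 1]%R by rewrite in_itv /= lexx ler01.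
apply/gV/(connected_x_in_Z (j := j)).
- by apply: connected_continuous_connected => //; exact: segment_connected.
- by exists w; split => //; exists 0%R.
- by exists z; split; [exists 1%R | move/N_notX].
Qed.

Lemma collapse_continuous k : continuous (collapse k).
Proof.
move=> z U /=.
have [Xz|/notX_N [j Njz]] := pselect (X (val z)).
  rewrite collapseX // => /lpcT [V [nV VU pcV]].
  apply: filterS (nV) => w Vw; apply: VU.
  apply: (collapse_path_connected_subset pcV (nbhs_singleton nV) Xz).
  by exists w.
have nNj : nbhs z (set_val @^-1` N j : set T).
  by apply: open_nbhs_nbhs; split => //; exists (N j).
rewrite (collapseN k Njz); case: ifP => kj nU.
  apply: filterS nNj => w Njw; rewrite /= (collapseN k Njw) kj.
  exact: nbhs_singleton nU.
apply: filterS (filterI nU nNj) => w [Uw Njw].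
by rewrite /= (collapseN k Njw) kj.
Qed.

Definition collapse_at (k : nat) (z : T) : T :=
  if `[< N k (val z) >] then x_in_Z k else z.

Lemma collapse_atN k z : N k (val z) -> collapse_at k z = x_in_Z k.
Proof. by move=> Nkz; rewrite /collapse_at asboolT. Qed.

Lemma collapse_at_id k z : ~ N k (val z) -> collapse_at k z = z.
Proof. by move=> nNkz; rewrite /collapse_at asboolF. Qed.

Lemma collapse_step k z : collapse k z = collapse_at k (collapse k.+1 z).
Proof.
have [Xz|/notX_N [j Njz]] := pselect (X (val z)).
  by rewrite !collapseX // collapse_at_id // => /N_notX.
rewrite !(collapseN _ Njz); case: ltngtP => kj.
- by rewrite collapse_at_id // => /N_notX; apply; exact: x_X.
- by rewrite collapse_at_id // => /(N_index_uniq Njz) jk; rewrite jk ltnn in kj.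
- by rewrite collapse_atN kj.
Qed.

Lemma collapse_eventually_id z :
  exists m, forall k, (m <= k) -> collapse k z = z.
Proof.
have [Xz|/notX_N [j Njz]] := pselect (X (val z)).
  by exists 0 => k _; rewrite collapseX.
by exists j.+1 => k jk; rewrite (collapseN k Njz) leqNgt jk.
Qed.

Lemma collapse_at_chain_stabilizes (w : nat -> T) :
    (forall k, w k = collapse_at k (w k.+1)) ->
  exists m, forall n, (m <= n) -> w n = w m.
Proof.
move=> w_step.
have step n : ~ N n (val (w n.+1)) -> w n.+1 = w n.
  by move=> nN; rewrite [w n]w_step collapse_at_id.
have [[m nXm]|allX] := pselect (exists m, ~ X (val (w m))).
  exists m => n /subnK <-; elim: (n - m) => // d IH.
  rewrite addSn step ?IH // => Nd; apply: nXm.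
  by rewrite -IH w_step collapse_atN //; exact: x_X.
exists 0 => n _; elim: n => // n IH; rewrite step ?IH // => /N_notX; apply.
by apply: contrapT => nX; apply: allX; exists n.+1.
Qed.

Lemma collapse_chain_down (w : nat -> T) (z : T) d n :
    (forall k, w k = collapse_at k (w k.+1)) ->
  collapse (d + n) z = w (d + n) -> collapse n z = w n.
Proof.
move=> w_step; elim: d n => [//|d IH] n zdn.
by rewrite collapse_step (IH n.+1) -?w_step // -addSnnS.
Qed.

Local Notation X' := (set_type (Z `&` X)).
Local Notation A' := (fun j => set_type (Z `&` A j)).

Definition x_in_X' j : X' :=
  exist _ (x j) (mem_set (conj (Z_x j) (@x_X j))).
Definition x_in_A' j : A' j :=
  exist _ (x j) (mem_set (conj (Z_x j) (@x_A j))).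

Local Notation stage k := (adj_stage x_in_X' x_in_A' k).

Definition piece_val k (o : option 'I_k) : adj_piece X' A' o -> T :=
  match o with
  | Some j => set_type_incl (@subIsetl _ Z (A j))
  | None => set_type_incl (@subIsetl _ Z X)
  end.

Definition sum_val k (s : adj_sum X' A' k) : T := piece_val (projT2 s).

Definition glued_val (g : X' + {j : nat & A' j}) : T :=
  match g with
  | inl p => set_type_incl (@subIsetl _ Z X) p
  | inr (existT j y) => set_type_incl (@subIsetl _ Z (A j)) y
  end.

Definition glued_normal (g : X' + {j : nat & A' j}) : Prop :=
  if g is inr (existT j y) then val y <> x j else True.

Lemma sum_val_glue k (s : adj_sum X' A' k) :
  sum_val s = glued_val (adj_glue x_in_X' x_in_A' s).
Proof.
by case: s => -[j|] y //=; case: asboolP => [->|] //; apply: val_inj.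
Qed.

Lemma adj_glue_normal k (s : adj_sum X' A' k) :
  glued_normal (adj_glue x_in_X' x_in_A' s).
Proof.
case: s => -[j|] y //=; case: asboolP => //= yx yxj.
by apply: yx; apply: val_inj.
Qed.

Lemma glued_val_inj g g' : glued_normal g -> glued_normal g' ->
  glued_val g = glued_val g' -> g = g'.
Proof.
have X'_X (p : X') : X (val p) by have /set_mem [] := valP p.
have A'_N j (y : A' j) : val y <> x j -> N j (val y).
  by have /set_mem [_ Ay] := valP y; exact: A_N.
case: g => [p|[j y]] ng; case: g' => [p'|[i y']] ng' /(congr1 val) /= e.
- by congr inl; apply: val_inj.
- by case: (N_notX (A'_N _ _ ng')); have := X'_X p; rewrite /= e.
- by case: (N_notX (A'_N _ _ ng)); have := X'_X p'; rewrite /= -e.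
- have ij : i = j.
    by apply: N_index_uniq (A'_N _ _ ng); have := A'_N _ _ ng'; rewrite /= -e.
  by subst i; congr inr; congr existT; apply: val_inj.
Qed.

Lemma sum_val_continuous k : continuous (@sum_val k).
Proof. by apply: sigT_continuous => -[j|]; exact: set_type_incl_continuous. Qed.

Definition stage_val k (q : stage k) : T := sum_val (repr q).

Lemma stage_val_pi k (s : adj_sum X' A' k) :
  stage_val (\pi_(stage k) s) = sum_val s.
Proof.
have /eqmodP/asboolP e : repr (\pi_(stage k) s) = s %[mod stage k].
  by rewrite reprK.
by rewrite /stage_val !sum_val_glue e.
Qed.

Lemma stage_val_inj k : injective (@stage_val k).
Proof.
move=> q q' e; rewrite -[q]reprK -[q']reprK; apply/eqmodP/asboolP.
by apply: glued_val_inj; rewrite -?sum_val_glue //; exact: adj_glue_normal.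
Qed.

Lemma stage_val_continuous k : continuous (@stage_val k).
Proof.
apply/quotient_continuous; rewrite (_ : _ \o _ = @sum_val k).
  exact: sum_val_continuous.
by apply/funext => s; exact: stage_val_pi.
Qed.

Lemma stage_hausdorff k : hausdorff_space (stage k).
Proof.
exact: inj_hausdorff (@stage_val_continuous k) (@stage_val_inj k) T_hausdorff.
Qed.

Lemma stage_compact k : compact [set: stage k].
Proof.
have -> : [set: stage k] = \pi_(stage k) @` [set: adj_sum X' A' k].
  by apply/seteqP; split => // q _; exists (repr q) => //; rewrite reprK.
apply: continuous_compact; first exact/continuous_subspaceT/pi_continuous.
apply: sigT_compact; first exact: finite_finset.
case=> [j|] /=; apply/set_type_compact/compact_closedI; try exact: Z_compact.
  by rewrite AN; exact: closed_closure.
exact: cX.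
Qed.

Lemma stage_val_bond k (q : stage k.+1) :
  stage_val (adj_bond q) = collapse_at k (stage_val q).
Proof.
rewrite /adj_bond /stage_val; case: (repr q) => -[[j ltjk]|] y /=; last first.
  rewrite -/(stage_val _) stage_val_pi collapse_at_id //= => /N_notX; apply.
  by have /set_mem [] := valP y.
have /set_mem [_ Ay] := valP y.
(* [adj_bond] matches on [j < k] dependently; abstract only the occurrences
   outside the branch bodies. *)
move: (erefl (j < k)); case: {2 3}(j < k) => jk;
  rewrite -/(stage_val _) stage_val_pi /=.
  rewrite collapse_at_id //= => Nky.
  have [yx|/(A_N Ay) /(N_index_uniq Nky) /= kj] := pselect (val y = x j).
    by apply: (N_notX Nky); rewrite yx; exact: x_X.
  by move: jk; rewrite -kj ltnn.
have jk' : j = k by apply/eqP; rewrite eqn_leq -ltnS ltjk leqNgt jk.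
subst j; have [yx|/(A_N Ay) Nky] := pselect (val y = x k).
  rewrite collapse_at_id; first by apply: val_inj; exact: (esym yx).
  by move=> /N_notX; apply; have := @x_X k; rewrite -yx.
by rewrite collapse_atN //; apply: val_inj.
Qed.

Lemma collapse_in_stage k z : exists q : stage k, stage_val q = collapse k z.
Proof.
have [Xz|/notX_N [j Njz]] := pselect (X (val z)).
  pose p : X' := exist _ (val z) (mem_set (conj (Z_val z) Xz)).
  exists (\pi_(stage k) (existT _ None p : adj_sum X' A' k)).
  by rewrite stage_val_pi collapseX //; apply: val_inj.
rewrite (collapseN k Njz); case: ifPn => kj.
  pose p : adj_sum X' A' k := existT _ None (x_in_X' j).
  exists (\pi_(stage k) p).
  by rewrite stage_val_pi; apply: val_inj.
have jk : (j < k) by rewrite ltnNge.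
pose y : A' j := exist _ (val z) (mem_set (conj (Z_val z) (N_A Njz))).
exists (\pi_(stage k) (existT _ (Some (Ordinal jk)) y : adj_sum X' A' k)).
by rewrite stage_val_pi; apply: val_inj.
Qed.

Definition stage_proj k (z : T) : stage k :=
  projT1 (cid (collapse_in_stage k z)).

Lemma stage_projE k z : stage_val (stage_proj k z) = collapse k z.
Proof. exact: projT2 (cid (collapse_in_stage k z)). Qed.

Lemma stage_proj_continuous k : continuous (stage_proj k).
Proof.
apply: compact_inj_continuous_lift (@stage_compact k) T_hausdorff
  (@stage_val_continuous k) (@stage_val_inj k) _.
rewrite (_ : _ \o _ = collapse k); first exact: collapse_continuous.
by apply/funext => z; exact: stage_projE.
Qed.

Lemma stage_proj_bond k z : adj_bond (stage_proj k.+1 z) = stage_proj k z.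
Proof.
by apply: stage_val_inj; rewrite stage_val_bond !stage_projE -collapse_step.
Qed.

Local Notation L := (shrinking_adjunction x_in_X' x_in_A').

Definition to_limit (z : T) : L :=
  exist _ (fun k => stage_proj k z)
    (@mem_set _ (adj_limit_set (a := x_in_A')) _ (stage_proj_bond^~ z)).

Lemma to_limit_continuous : continuous to_limit.
Proof.
apply: continuous_comp_initial; apply: prod_topology_continuous => k.
exact: stage_proj_continuous.
Qed.

Lemma to_limit_inj : injective to_limit.
Proof.
move=> z z' e.
have [m zm] := collapse_eventually_id z.
have [m' zm'] := collapse_eventually_id z'.
have := congr1 (fun y : L => stage_val (val y (maxn m m'))) e.
by rewrite /= !stage_projE zm ?leq_maxl // zm' ?leq_maxr.
Qed.

Lemma to_limit_surj (y : L) : exists z, to_limit z = y.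
Proof.
pose w k := stage_val (val y k).
have w_step k : w k = collapse_at k (w k.+1).
  by rewrite /w -stage_val_bond (set_mem (valP y)).
have [m wm] := collapse_at_chain_stabilizes w_step.
have [m' zm'] := collapse_eventually_id (w m).
exists (w m); apply: val_inj; apply: functional_extensionality_dep => k /=.
apply: stage_val_inj.
rewrite stage_projE -/(w k); pose M := maxn k (maxn m m').
apply: (collapse_chain_down (d := (M - k)) w_step).
rewrite subnK ?leq_maxl //.
by rewrite zm' ?wm // (leq_trans _ (leq_maxr k _)) ?leq_maxl ?leq_maxr.
Qed.

Lemma limit_hausdorff : hausdorff_space L.
Proof.
apply: inj_hausdorff
  (@set_val_continuous _ (adj_limit_set (a := x_in_A'))) val_inj _.
by apply: hausdorff_product => k; exact: stage_hausdorff.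
Qed.

Lemma subcontinuum_homeomorphic_limit : homeomorphic T L.
Proof.
exact: compact_hausdorff_homeomorphic cT limit_hausdorff to_limit_continuous
  to_limit_inj to_limit_surj.
Qed.

End Subcontinuum.
End IndeterminateAdjunction.

Theorem proposition3p15 (R : realType) (Y : topologicalType) (X : set Y)
    (A : nat -> set Y) (x : nat -> Y) (Z : set Y) :
  hausdorff_space Y ->
  indeterminate_adjunction X A x ->
  peano_continuum R (set_type Z) ->
  Z `&` X !=set0 ->
  (forall j, Z `&` (A j `\ x j) !=set0) ->
  exists (hX : forall j, x j \in Z `&` X) (hA : forall j, x j \in Z `&` A j),
    homeomorphic (set_type Z)
      (@shrinking_adjunction (set_type (Z `&` X))
         (fun j => set_type (Z `&` A j))
         (fun j => exist _ (x j) (hX j))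
         (fun j => exist _ (x j) (hA j))).
Proof.
move=> hY [cX [N [oN dN XN AN AX]]] [cT conT lpcT _] ZX ZA.
do 2!eexists.
exact: (subcontinuum_homeomorphic_limit oN dN XN AN AX
  hY cX cT conT lpcT ZX ZA).
Qed.
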